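(* Let $n\ge 2$ and let ${\cal K}$ be a strongly connected closed simplicial complex of dimension $n$ of type $\{3,4\}$. Suppose there is an $(n-1)$-face $G$ of ${\cal K}$ such that every $(n-2)$-face $F\subset G$ lies in exactly $3$ $n$-faces. Then ${\cal K}$ is isomorphic to the boundary complex of the $(n+1)$-simplex (all proper nonempty subsets of an $(n+2)$-element set).
   Context: An (abstract) simplicial complex of dimension $n$ is a family of finite nonempty sets closed under taking nonempty subsets and under nonempty intersections, whose maximal members ($n$-faces) all have cardinality $n+1$. It is closed if every $(n-1)$-face lies in exactly two $n$-faces, and strongly connected if any two $n$-faces can be joined by a sequence of $n$-faces in which consecutive ones share an $(n-1)$-face. It is of type $\{3,4\}$ if every $(n-2)$-face lies in exactly $3$ or $4$ $n$-faces. *)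

From mathcomp Require Import all_boot all_order.
From mathcomp Require Import finmap.
From Stdlib Require Import Relations.Relation_Operators.
Set Implicit Arguments.
Unset Strict Implicit.
Unset Printing Implicit Defensive.
Open Scope fset_scope.

Section SC.
Variable T : choiceType.
Variable K : {fset T} -> Prop.

Definition simplicial_complex (n : nat) : Prop :=
  [/\ (forall S, K S -> S != fset0),
      (forall S S', K S -> S' `<=` S -> S' != fset0 -> K S'),
      (forall S S', K S -> K S' -> S `&` S' != fset0 -> K (S `&` S')),
      (forall S, K S -> #|` S| <= n.+1) &
      (forall S, K S -> (forall S', K S' -> S `<=` S' -> S' = S) ->
                 #|` S| = n.+1)].

Definition face (k : nat) (S : {fset T}) : Prop := K S /\ #|` S| = k.+1.

Definition in_exactly (n : nat) (F : {fset T}) (m : nat) : Prop :=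
  exists s : seq {fset T},
    [/\ uniq s, size s = m &
        forall S, S \in s <-> (face n S /\ F `<=` S)].

Definition closed_complex (n : nat) : Prop :=
  forall G, face n.-1 G -> in_exactly n G 2.

Definition adjacent (n : nat) (A B : {fset T}) : Prop :=
  face n A /\ face n B /\ face n.-1 (A `&` B).

Definition strongly_connected (n : nat) : Prop :=
  forall A B, face n A -> face n B -> clos_refl_trans _ (adjacent n) A B.

Definition type34 (n : nat) : Prop :=
  forall F, face (n - 2) F -> in_exactly n F 3 \/ in_exactly n F 4.

(* K is isomorphic to the boundary complex of the (n+1)-simplex on 'I_(n+2):
   a bijection f from the vertices of K onto 'I_(n+2) such that the faces of K
   are exactly the nonempty vertex sets whose image is a proper subset. *)
Definition iso_boundary_simplex (n : nat) : Prop :=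
  exists f : T -> 'I_n.+2,
    [/\ (forall v w, K [fset v] -> K [fset w] -> f v = f w -> v = w),
        (forall i, exists v, K [fset v] /\ f v = i) &
        (forall S, K S <->
           [/\ S != fset0, (forall v, v \in S -> K [fset v]) &
               #|` f @` S| < n.+2])].
End SC.

From mathcomp Require Import all_boot all_order.
From mathcomp Require Import finmap.
From mathcomp Require Import zify.
From Stdlib Require Import Classical.
Set Implicit Arguments.
Unset Strict Implicit.
Unset Printing Implicit Defensive.
Open Scope fset_scope.

(* Let [a |` G] and [b |` G] be the two facets through the ridge [G], and
   [V := a |` (b |` G)].  For [x \in G] the (n-2)-face [F := G `\ x] lies in
   exactly three facets; besides [a |` G] and [b |` G], the second facet
   through the ridge [a |` F] and the second facet through [b |` F] must both
   be the third one, which therefore contains [V `\ x].  Hence every facet,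
   and so every proper face, of the simplex on [V] lies in [K].  By closedness
   no facet adjacent to a facet inside [V] can leave [V], so by strong
   connectivity all of [K] lies in [V]. *)

Lemma fsubset_card_succ (T : choiceType) (G X : {fset T}) :
  G `<=` X -> #|`X| = #|`G|.+1 -> exists2 x, x \notin G & X = x |` G.
Proof.
move=> GX cardX.
have : ~~ (X `<=` G) by apply/negP => /fsubset_leq_card; rewrite cardX ltnn.
case/fsubsetPn => x xX xG; exists x => //.
apply/eqP; rewrite eq_sym eqEfcard fsubUset fsub1set xX GX.
by rewrite cardfsU1 xG cardX /= add1n.
Qed.

Section Complex.
Variables (T : choiceType) (K : {fset T} -> Prop) (n : nat).

Lemma in_exactly_size_leq F m (r : seq {fset T}) :
  in_exactly K n F m -> uniq r ->
  (forall S, S \in r -> face K n S /\ F `<=` S) -> size r <= m.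
Proof. by move=> [s [_ <- sE]] ur rF; apply: uniq_leq_size ur _ => S /rF /sE. Qed.

Lemma in_exactly3_eq F A B D E : in_exactly K n F 3 ->
  A != B -> D != A -> D != B -> E != A -> E != B ->
  (forall S, S \in [:: A; B; D; E] -> face K n S /\ F `<=` S) -> D = E.
Proof.
move=> F3 neAB neDA neDB neEA neEB facets; apply/eqP; apply: contraT => neDE.
suff : 4 <= 3 by [].
apply: in_exactly_size_leq F3 _ facets.
by rewrite /= !inE !negb_or neAB !(eq_sym A) neDA neEA !(eq_sym B) neDB neEB neDE.
Qed.

Lemma iso_boundary_simplex_of V : #|`V| = n.+2 ->
  (forall S, K S <-> [/\ S != fset0, S `<=` V & S != V]) ->
  iso_boundary_simplex K n.
Proof.
move=> cardV KE; pose s := enum_fset V; have size_s : size s = n.+2 := cardV.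
have [v0 _] : exists v0, v0 \in V by apply/fset0Pn; rewrite -cardfs_gt0 cardV.
have K1 v : K [fset v] <-> v \in V.
  rewrite KE fsub1set -cardfs_gt0 cardfs1; split => [[] | vV] //; split => //.
  by apply/eqP => eV; move: cardV; rewrite -eV cardfs1.
pose f v : 'I_n.+2 := inord (index v s).
have fE : {in V, forall v, f v = index v s :> nat}.
  by move=> v vV; rewrite /f inordK // -size_s index_mem.
have f_inj : {in V &, injective f}.
  move=> v w vV wV /(congr1 val); rewrite /= !fE // => e.
  by rewrite -(nth_index v0 vV) e nth_index.
exists f; split.
- by move=> v w /K1 vV /K1 wV; apply: f_inj.
- move=> i; have lt_i : i < size s by rewrite size_s ltn_ord.
  exists (nth v0 s i); have iV : nth v0 s i \in V by apply: mem_nth.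
  by split; [apply/K1 | apply: val_inj; rewrite /= fE // index_uniq ?fset_uniq].
move=> S; have cardfS : S `<=` V -> #|`f @` S| = #|`S|.
  move=> SV; apply/eqP/card_in_imfsetP => v w /(fsubsetP SV) vV /(fsubsetP SV).
  exact: f_inj.
rewrite KE; split => [[S0 SV neSV] | [S0 S1 ltS]].
  split => // [v vS|]; first by apply/K1; apply: (fsubsetP SV).
  by rewrite cardfS // -cardV fproper_ltn_card // fproperEneq neSV.
have SV : S `<=` V by apply/fsubsetP => v /S1 /K1.
by split => //; apply: contraTneq ltS => eSV; rewrite cardfS // eSV cardV ltnn.
Qed.

Section Simplicial.
Hypothesis SC : simplicial_complex K n.

Lemma K_neq0 S : K S -> S != fset0.
Proof. by case: SC => h _ _ _ _; apply: h. Qed.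

Lemma K_sub S S' : K S -> S' `<=` S -> S' != fset0 -> K S'.
Proof. by case: SC => _ h _ _ _; apply: h. Qed.

Lemma K_card_leq S : K S -> #|`S| <= n.+1.
Proof. by case: SC => _ _ _ h _; apply: h. Qed.

Lemma facet_superset S : K S -> exists2 M, face K n M & S `<=` M.
Proof.
have [k] := ubnP (n.+1 - #|`S|); elim: k S => // k IH S ltk KS.
case: (classic (exists2 S', K S' & S `<` S')) => [[S' KS' ltSS'] | maxS].
  have [|M fM S'M] := IH S' _ KS'.
    by have := fproper_ltn_card ltSS'; have := K_card_leq KS'; lia.
  by exists M => //; apply: fsubset_trans (fproper_sub ltSS') S'M.
exists S => //; split => //; case: SC => _ _ _ _ -> // S' KS' SS'.
apply/eqP; apply: contraT => neS'S; case: maxS; exists S' => //.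
by rewrite fproperEneq eq_sym neS'S.
Qed.

Section Closed.
Hypothesis CL : closed_complex K n.

Lemma other_facet R X : face K n.-1 R -> face K n X -> R `<=` X ->
  exists2 Y, face K n Y /\ R `<=` Y & Y != X.
Proof.
move=> fR fX RX; have [s [us ss sE]] := CL fR.
case: s us ss sE => [|Y1 [|Y2 [|]]] //= /andP [+ _] _ sE; rewrite inE => neY12.
have [<- | neY1X] := eqVneq Y1 X.
  by exists Y2; [apply/sE; rewrite !inE eqxx orbT | rewrite eq_sym].
by exists Y1 => //; apply/sE; rewrite inE eqxx.
Qed.

Lemma other_facet_through c F X : face K n X -> c \in X -> F `<=` X ->
  c \notin F -> #|`F| = n.-1 -> exists2 Y, face K n Y /\ c |` F `<=` Y & Y != X.
Proof.
move=> fX cX FX cF cardF.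
have cFX : c |` F `<=` X by rewrite fsubUset fsub1set cX.
apply: (other_facet _ fX cFX); split; last by rewrite cardfsU1 cF cardF.
by apply: K_sub (proj1 fX) cFX _; apply/fset0Pn; exists c; rewrite fsetU11.
Qed.

Section SimplexBoundary.
Hypothesis n_gt0 : 0 < n.
Variable V : {fset T}.
Hypothesis cardV : #|`V| = n.+2.
Hypothesis KV : forall v, v \in V -> K (V `\ v).

Lemma proper_subset_in_K S : S `<=` V -> S != V -> S != fset0 -> K S.
Proof.
move=> SV neSV S0.
have : ~~ (V `<=` S) by apply: contra neSV => VS; rewrite eqEfsubset SV.
case/fsubsetPn => v vV vS; apply: K_sub (KV vV) _ S0.
by rewrite fsubsetD1 SV.
Qed.

Lemma card_fsetD1_simplex v : v \in V -> #|`V `\ v| = n.+1.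
Proof. by move=> vV; move: cardV; rewrite (cardfsD1 v) vV => -[]. Qed.

(* Otherwise [X], [Y] and [V `\ x], for some [x \in X `\` Y], would be three
   facets through the ridge [X `&` Y]. *)
Lemma adjacent_subset X Y : adjacent K n X Y -> X `<=` V -> Y `<=` V.
Proof.
move=> [fX [fY fXY]] XV; apply: contraT => /fsubsetPn [y yY yV].
have : ~~ (X `<=` X `&` Y).
  by apply/negP => /fsubset_leq_card; case: fX fXY => _ -> [_ ->]; lia.
case/fsubsetPn => x xX xXY; have xV := fsubsetP XV x xX.
suff : 3 <= 2 by [].
apply: (in_exactly_size_leq (CL fXY) (r := [:: X; Y; V `\ x])) => [|Z].
  rewrite /= !inE !negb_or andbT -andbA; apply/and3P; split.
  - by apply: contraNneq yV => eXY; apply: (fsubsetP XV); rewrite eXY.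
  - by apply: contraTneq xX => ->; rewrite fsetD11.
  - by apply: contraNneq yV => eYV; move: yY; rewrite eYV => /fsetD1P [].
have fVx : face K n (V `\ x) := conj (KV xV) (card_fsetD1_simplex xV).
have XYVx : X `&` Y `<=` V `\ x.
  by rewrite fsubsetD1 xXY andbT (fsubset_trans (fsubsetIl X Y) XV).
by rewrite !inE => /or3P [] /eqP ->; split; rewrite ?fsubsetIl ?fsubsetIr.
Qed.

Hypothesis SCo : strongly_connected K n.

Lemma K_subset_simplex S : K S -> S `<=` V.
Proof.
move=> /facet_superset [M fM SM]; apply: fsubset_trans SM _.
have [v vV] : exists v, v \in V by apply/fset0Pn; rewrite -cardfs_gt0 cardV.
have fVv : face K n (V `\ v) by split; [exact: KV | exact: card_fsetD1_simplex].
elim: (SCo fVv fM) (fsubD1set V v) => // [X Y|X Y Z _ IHXY _ IHYZ XV].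
  exact: adjacent_subset.
exact: IHYZ (IHXY XV).
Qed.

Lemma K_simplexE S : K S <-> [/\ S != fset0, S `<=` V & S != V].
Proof.
split => [KS | [S0 SV neSV]]; last exact: proper_subset_in_K.
split; [exact: K_neq0 | exact: K_subset_simplex |].
by apply: contraTneq (K_card_leq KS) => ->; rewrite cardV ltnn.
Qed.

End SimplexBoundary.

Section Ridge.
Hypothesis n_ge2 : 2 <= n.

Lemma facets_through_ridge G : face K n.-1 G -> exists a b,
  [/\ a \notin G, b \notin G, a != b, face K n (a |` G) & face K n (b |` G)].
Proof.
move=> fG; have [A fA GA] := facet_superset (proj1 fG).
have [B [fB GB] neBA] := other_facet fG fA GA.
have cardG_succ X : face K n X -> #|`X| = #|`G|.+1.
  by case: fG => _ -> [_ ->]; lia.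
have [a aG eA] := fsubset_card_succ GA (cardG_succ _ fA).
have [b bG eB] := fsubset_card_succ GB (cardG_succ _ fB).
exists a, b; split; rewrite -?eA -?eB //.
by apply: contraNneq neBA => eab; rewrite eA eB eab.
Qed.

Variables (G : {fset T}) (a b : T).
Hypothesis fG : face K n.-1 G.
Hypothesis G3 : forall F, face K (n - 2) F -> F `<=` G -> in_exactly K n F 3.
Hypotheses (aG : a \notin G) (bG : b \notin G) (neab : a != b).
Hypotheses (fA : face K n (a |` G)) (fB : face K n (b |` G)).

Lemma apices_fsetD1_in_K x : x \in G -> K (a |` (b |` (G `\ x))).
Proof.
move=> xG; have cardF : #|`G `\ x| = n.-1.
  by case: fG => _; rewrite (cardfsD1 x) xG; lia.
set F := G `\ x; have FG : F `<=` G := fsubD1set G x.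
have fF : face K (n - 2) F.
  split; last by rewrite cardF; lia.
  by apply: K_sub (proj1 fG) FG _; rewrite -cardfs_gt0 cardF; lia.
have notinF c : c \notin G -> c \notin F by apply: contra; apply: (fsubsetP FG).
have FU c : F `<=` c |` G := fsubset_trans FG (fsubsetU1 c G).
have [D [fD aFD] neDA] :=
  other_facet_through fA (fsetU11 a G) (FU a) (notinF a aG) cardF.
have [E [fE bFE] neEB] :=
  other_facet_through fB (fsetU11 b G) (FU b) (notinF b bG) cardF.
have aD : a \in D := fsubsetP aFD a (fsetU11 a F).
have bE : b \in E := fsubsetP bFE b (fsetU11 b F).
have aB : a \notin b |` G by rewrite !inE negb_or neab.
have bA : b \notin a |` G by rewrite !inE negb_or eq_sym neab.
have eDE : D = E.
  apply: (in_exactly3_eq (A := a |` G) (B := b |` G) (G3 fF FG)) => // [||| S].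
  - by apply: contraTneq (fsetU11 a G) => ->.
  - by apply: contraTneq aD => ->.
  - by apply: contraTneq bE => ->.
  rewrite !inE => /or4P [] /eqP ->; split => //.
  - exact: fsubset_trans (fsubsetU1 a F) aFD.
  - exact: fsubset_trans (fsubsetU1 b F) bFE.
apply: K_sub (proj1 fD) _ _; last by apply/fset0Pn; exists a; rewrite fsetU11.
by rewrite !fsubUset !fsub1set aD eDE bE -eDE (fsubset_trans (fsubsetU1 a F) aFD).
Qed.

Lemma simplex_facets_in_K y :
  y \in a |` (b |` G) -> K ((a |` (b |` G)) `\ y).
Proof.
have aV y' : y' != a -> a \in (a |` (b |` G)) `\ y'.
  by rewrite !inE eqxx /= andbT eq_sym.
rewrite !inE => /or3P [/eqP -> | /eqP -> | yG].
- by rewrite fsetU1K; [case: fB | rewrite !inE negb_or neab].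
- apply: K_sub (proj1 fA) _ _; last by apply/fset0Pn; exists a; rewrite aV // eq_sym.
  by apply/fsubsetP => z; rewrite !inE; case: (z == b).
- apply: K_sub (apices_fsetD1_in_K yG) _ _.
    by apply/fsubsetP => z; rewrite !inE; case: (z == a); case: (z == b).
  by apply/fset0Pn; exists a; apply: aV; apply: contraNneq aG => <-.
Qed.

End Ridge.
End Closed.
End Simplicial.
End Complex.

Theorem mainTheorem3 (T : choiceType) (K : {fset T} -> Prop) (n : nat) :
  2 <= n ->
  simplicial_complex K n ->
  closed_complex K n ->
  strongly_connected K n ->
  type34 K n ->
  (exists G, face K n.-1 G /\
     (forall F, face K (n - 2) F -> F `<=` G -> in_exactly K n F 3)) ->
  iso_boundary_simplex K n.
Proof.
move=> n_ge2 SC CL SCo _ [G [fG G3]].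
have [a [b [aG bG neab fA fB]]] := facets_through_ridge SC CL n_ge2 fG.
have cardV : #|`a |` (b |` G)| = n.+2.
  by rewrite !cardfsU1 !inE negb_or neab aG bG; case: fG => _ ->; lia.
have KV := simplex_facets_in_K SC CL n_ge2 fG G3 aG bG neab fA fB.
exact: iso_boundary_simplex_of cardV (K_simplexE SC CL (ltnW n_ge2) cardV KV SCo).
Qed.
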